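(* For every integer $s\geq1$, \[ \sum_{n_1\geq\cdots\geq n_s\geq n_{s+1}\geq2}\frac{1}{n_1(n_1-1)\cdots n_s(n_s-1)\,n_{s+1}}\leq\frac{1}{2^{s+1}}\prod_{l\geq3}\frac{1}{1-\frac{2}{l(l-1)}}+\zeta^{\star}(\{2\}^s,1)-\zeta^{\star}(\{2\}^s). \]
   Context: $\zeta^{\star}(k_1,\ldots,k_r)=\sum_{n_1\geq\cdots\geq n_r\geq 1}\frac{1}{n_1^{k_1}\cdots n_r^{k_r}}$ for $k_1\geq2$, $k_2,\ldots,k_r\geq1$; $\{2\}^s$ denotes $s$ consecutive arguments equal to $2$. *)

From HB Require Import structures.
From mathcomp Require Import all_boot all_order all_algebra.
From mathcomp Require Import all_classical all_reals all_analysis.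
Set Implicit Arguments. Unset Strict Implicit. Unset Printing Implicit Defensive.
Import Order.TTheory GRing.Theory Num.Theory.
Import numFieldNormedType.Exports.
Local Open Scope classical_set_scope.
Local Open Scope ring_scope.

Definition chains (r lo : nat) : set (seq nat) :=
  [set n | size n = r /\ sorted geq n /\ all (fun m => lo <= m)%N n].

Definition zeta_star (R : realType) (ks : seq nat) : \bar R :=
  (\esum_(n in chains (size ks) 1)
     (\prod_(i < size ks) ((nth 0%N n i)%:R ^- (nth 0%N ks i) : R))%:E)%E.

Definition lhs41 (R : realType) (s : nat) : \bar R :=
  (\esum_(n in chains s.+1 2)
     ((\prod_(i < s) ((nth 0%N n i)%:R * ((nth 0%N n i)%:R - 1))^-1)
        * ((nth 0%N n s)%:R)^-1 : R)%:E)%E.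

Definition prod41_partial (R : realType) : R^nat := fun L =>
  \prod_(3 <= l < L) (1 - 2 / ((l%:R : R) * (l%:R - 1)))^-1.

Definition prod41 (R : realType) : R :=
  limn (prod41_partial R).

From HB Require Import structures.
From mathcomp Require Import all_boot all_order all_algebra.
From mathcomp Require Import all_classical all_reals all_analysis.
From mathcomp Require Import zify ring lra.
Import Order.TTheory GRing.Theory Num.Theory.
Import numFieldNormedType.Exports.
Local Open Scope ring_scope.
Local Open Scope classical_set_scope.

(* Split the left-hand sum according to whether n_(s+1) = 2.  If n_(s+1) >= 3,
   lowering every index by one and using 1/((m+1)m) <= 1/m^2, 1/(m+1) <= 1/m
   bounds the sum by the part of zeta*({2}^s,1) with n_(s+1) >= 2, which is
   zeta*({2}^s,1) - zeta*({2}^s) (the subtraction is legitimate because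
   1/m^2 <= 2/(m(m+1)) makes zeta*({2}^s) finite).  If n_(s+1) = 2, the sum is
   K_s/2 with K_r = sum over n_1 >= ... >= n_r >= 2 of prod 1/(n_i(n_i-1)).
   Truncating the indices at n, K_(r+1)(n+1) <= K_(r+1)(n) + K_r(n+1)/((n+1)n),
   and the partial products P(n) = prod_(3<=l<n) 1/(1 - 2/(l(l-1))) satisfy
   P(n) = (1 - 2/(n(n-1))) P(n+1), so 2^-r P(n+1) solves this recursion with
   equality; hence K_s <= 2^-s prod_(l>=3) 1/(1 - 2/(l(l-1))). *)

Lemma sorted_geq_rcons d x : sorted geq (rcons d x) = all (leq x) d && sorted geq d.
Proof. by rewrite !(sorted_pairwise (rev_trans leq_trans)) pairwise_rcons. Qed.

Lemma chainsS r k : chains r k.+1 `<=` chains r k.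
Proof.
move=> c [hs [hso ha]]; split=> //; split=> //.
by apply: sub_all ha => x /=; lia.
Qed.

Lemma chains_succ r k : chains r k.+1 = map succn @` chains r k.
Proof.
have shift_sorted (f : nat -> nat) c : {homo f : x y / (y <= x)%N} ->
    sorted geq c -> sorted geq (map f c).
  by move=> fmono; apply: homo_sorted => x y /= /fmono.
apply/seteqP; split => [c [hs [hso ha]]|_ [d [hs [hso ha]] <-]].
  have c_pos : {in c, forall x, x.-1.+1 = x} by move=> x /(allP ha) /=; lia.
  exists (map predn c); last by rewrite -map_comp map_id_in.
  split; first by rewrite size_map.
  split; first by apply: shift_sorted hso => x y; lia.
  by rewrite all_map; apply/allP => x /(allP ha) /=; lia.
split; first by rewrite size_map.
split; first by apply: shift_sorted hso => x y; lia.
by rewrite all_map.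
Qed.

Lemma chainsD_rcons r k :
  chains r.+1 k `\` chains r.+1 k.+1 = rcons^~ k @` chains r k.
Proof.
apply/seteqP; split => [c [[hs [hso ha]] hnot]|_ [d [hs [hso ha]] <-]].
  case/lastP: c hs hso ha hnot => [//|d x].
  rewrite size_rcons sorted_geq_rcons all_rcons => -[hs] /andP[xd hso] /andP[kx ha] hnot.
  have -> : x = k.
    apply/eqP; rewrite eqn_leq kx andbT leqNgt; apply/negP => kx'.
    apply: hnot; split; first by rewrite size_rcons hs.
    rewrite sorted_geq_rcons xd hso all_rcons kx' /=; split=> //.
    by apply: sub_all xd => y /=; lia.
  by exists d.
split; last by case=> _ [_]; rewrite all_rcons ltnn.
split; first by rewrite size_rcons hs.
by rewrite sorted_geq_rcons ha hso all_rcons leqnn.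
Qed.

Lemma finite_set_seq_bounded (X : set (seq nat)) : finite_set X ->
  exists n, X `<=` [set c | all (fun m => m <= n)%N c].
Proof.
case/finite_fsetP => B ->; exists (\max_(c <- finmap.enum_fset B) \max_(x <- c) x)%N.
move=> c cB; apply/allP => x xc /=.
apply: leq_trans (leq_bigmax_seq (F := fun c => \max_(x <- c) x)%N c cB isT).
exact: (leq_bigmax_seq (F := id) x xc isT).
Qed.

Local Open Scope ereal_scope.

Section esum_bounds.
Context {R : realType} {T : choiceType}.
Implicit Types (A B : set T) (a : T -> \bar R).

Lemma le_esum_subset A B a : B `<=` A -> (forall x, A x -> 0 <= a x) ->
  \esum_(i in B) a i <= \esum_(i in A) a i.
Proof.
move=> BA a0; rewrite (esumID B A) // setIidr // leeDl //.
by apply: esum_ge0 => x [/a0].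
Qed.

Lemma le_esum_setU A B a : (forall x, (A `|` B) x -> 0 <= a x) ->
  \esum_(i in A `|` B) a i <= \esum_(i in A) a i + \esum_(i in B) a i.
Proof.
move=> a0; rewrite (esumID B) // addeC.
apply: leeD; apply: le_esum_subset.
- by move=> x [[] // Bx] /(_ Bx).
- by move=> x Ax; apply: a0; left.
- by move=> x [].
- by move=> x Bx; apply: a0; right.
Qed.

Lemma esumZl_le A a (c : R) : (0 <= c)%R -> (forall x, 0 <= a x) ->
  \esum_(i in A) (c%:E * a i) <= c%:E * \esum_(i in A) a i.
Proof.
move=> c0 a0; apply: ge_ereal_sup => _ [X [finX XA] <-].
rewrite -ge0_mule_fsumr //; apply: lee_wpmul2l; first by rewrite lee_fin.
by apply: ereal_sup_ubound; exists X.
Qed.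

End esum_bounds.

Lemma esum_chains_rcons {R : realType} r k (a : seq nat -> \bar R) :
  (forall c, chains r.+1 k c -> 0 <= a c) ->
  \esum_(c in chains r.+1 k) a c =
  \esum_(c in chains r.+1 k.+1) a c + \esum_(d in chains r k) a (rcons d k).
Proof.
move=> a0; rewrite (esumID (chains r.+1 k.+1)) // setIidr; last exact: chainsS.
by rewrite -setDE chainsD_rcons esum_image // => d e _ _; exact: rcons_injl.
Qed.

Local Close Scope ereal_scope.

Section chain_sums.
Variable R : realType.

Definition inv_ffact2 (x : nat) : R := (x%:R * (x%:R - 1))^-1.

Lemma inv_ffact2_ge0 x : 0 <= inv_ffact2 x.
Proof.
rewrite invr_ge0; case: x => [|x]; first by rewrite mul0r.
by rewrite -natr1 addrK mulr_ge0 // addr_ge0.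
Qed.

Lemma inv_ffact2S_le x : (0 < x)%N -> inv_ffact2 x.+1 <= x%:R ^- 2.
Proof.
rewrite /inv_ffact2 -(natr1 x) addrK -(ler1n R) => x1.
by rewrite lef_pV2 ?posrE ?expr2; nra.
Qed.

Lemma inv_ffact2S_ge x : (0 < x)%N -> x%:R ^- 2 <= 2 * inv_ffact2 x.+1.
Proof.
rewrite /inv_ffact2 -(natr1 x) addrK -(ler1n R) => x1.
by rewrite -[2 : R]invrK -invfM lef_pV2 ?posrE ?expr2; nra.
Qed.

Lemma prod41_partial_closed n : prod41_partial R n.+3 = 3 * n.+1%:R / n.+3%:R.
Proof.
elim: n => [|n IH]; first by rewrite /prod41_partial big_geq //; field.
rewrite /prod41_partial big_nat_recr //= -/(prod41_partial R n.+3) IH.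
rewrite -[n.+4]addn4 -[n.+3]addn3 -[n.+2]addn2 -[n.+1]addn1 !natrD.
have n0 := ler0n R n.
have -> : 1 - 2 / ((n%:R + 3%:R) * (n%:R + 3%:R - 1)) =
    (n%:R + 1) * (n%:R + 4%:R) / ((n%:R + 3%:R) * (n%:R + 2%:R)) :> R.
  by field; lra.
by rewrite invf_div; field; lra.
Qed.

Lemma prod41E : prod41 R = 3.
Proof.
rewrite /prod41; apply: cvg_lim => //; rewrite -(cvg_shiftn 3).
have -> : [sequence prod41_partial R (n + 3)%N]_n =
    fun n => 3 - 6 * harmonic (n + 2)%N.
  apply/funext => n /=; rewrite addn3 addn2 prod41_partial_closed.
  by rewrite -addn1 -[n.+3]addn3 !natrD; field; have := ler0n R n; lra.
suff : (fun n => 3 - 6 * harmonic (n + 2)%N) @ \oo --> (3 - 6 * 0 : R).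
  by rewrite mulr0 subr0.
apply: cvgB; first exact: cvg_cst.
by apply: cvgMl_tmp; rewrite (cvg_shiftn 2 (@harmonic R)); exact: cvg_harmonic.
Qed.

Lemma prod41_partial_bounds n : 1 <= prod41_partial R n.+3 <= prod41 R.
Proof.
rewrite prod41_partial_closed prod41E.
have -> : n.+3%:R = n.+1%:R + 2 :> R by rewrite -[n.+3]addn2 natrD.
have n1 : 1 <= n.+1%:R :> R by rewrite ler1n.
by rewrite ler_pdivlMr ?ler_pdivrMr ?ltr_wpDl //; apply/andP; split; lra.
Qed.

Lemma prod41_partial_recr n :
  prod41_partial R n.+3 = (1 - 2 * inv_ffact2 n.+3) * prod41_partial R n.+4.
Proof.
rewrite !prod41_partial_closed /inv_ffact2.
rewrite -[n.+4]addn4 -[n.+3]addn3 -[n.+2]addn2 -[n.+1]addn1 !natrD.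
by have n0 := ler0n R n; field; lra.
Qed.

Definition bounded_chains r n := chains r 2 `&` [set c | all (fun m => m <= n)%N c].

Lemma bounded_chains0 n : bounded_chains 0 n = [set [::]].
Proof. by apply/seteqP; split => [c [[/size0nil ->]]|_ ->]. Qed.

Lemma bounded_chains_1 r : bounded_chains r.+1 1 = set0.
Proof.
apply/seteqP; split => // -[|x c] [[//= _ [_ /andP[x2 _]]] /= /andP[x1 _]].
by have := leq_trans x2 x1.
Qed.

Lemma bounded_chainsS r n : bounded_chains r.+1 n.+1 `<=`
  bounded_chains r.+1 n `|` cons n.+1 @` bounded_chains r n.+1.
Proof.
case=> [|x c] [chx]; first by case: chx.
move=> /andP[xn cn].
have [/succn_inj hs [hso /= /andP[_ c2]]] := chx.
move: hso; rewrite /= (path_sortedE (rev_trans leq_trans)) => /andP[cx hso].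
have [nx|xn'] := ltnP n x.
  by right; exists c; [split | congr cons; lia].
left; split => //=; rewrite xn' /=.
by apply: sub_all cx => y /= yx; lia.
Qed.

Definition chain_term (u v : nat -> R) s (c : seq nat) : R :=
  (\prod_(i < s) u (nth 0%N c i)) * v (nth 0%N c s).

Lemma chain_term_ge0 u v s c : (forall x, 0 <= u x) -> (forall x, 0 <= v x) ->
  0 <= chain_term u v s c.
Proof. by move=> u0 v0; rewrite mulr_ge0 ?prodr_ge0. Qed.

Lemma chain_term_rcons u v s d x : size d = s ->
  chain_term u v s (rcons d x) = \prod_(y <- d) u y * v x.
Proof.
move=> <-; rewrite /chain_term nth_rcons ltnn eqxx (big_nth 0%N) big_mkord.
by congr (_ * _); apply: eq_bigr => i _; rewrite nth_rcons ltn_ord.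
Qed.

Lemma chain_term_map_succ u v s c : size c = s.+1 ->
  chain_term u v s (map succn c) = chain_term (u \o succn) (v \o succn) s c.
Proof.
move=> hs; rewrite /chain_term (nth_map 0%N) ?hs //; congr (_ * _).
by apply: eq_bigr => i _; rewrite (nth_map 0%N) // hs ltnS ltnW.
Qed.

Lemma ler_chain_term u u' v v' s c : chains s.+1 1 c ->
  (forall x, (0 < x)%N -> 0 <= u x <= u' x) ->
  (forall x, (0 < x)%N -> 0 <= v x <= v' x) ->
  chain_term u v s c <= chain_term u' v' s c.
Proof.
move=> [hs [_ c_pos]] hu hv.
have nth_pos i : (i <= s)%N -> (0 < nth 0%N c i)%N.
  by move=> hi; apply: (allP c_pos); rewrite mem_nth // hs.
have /andP[v0 vv'] := hv _ (nth_pos s (leqnn s)).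
have hu' (i : 'I_s) := hu _ (nth_pos i (ltnW (ltn_ord i))).
apply: ler_pM => //; last exact: ler_prod.
by apply: prodr_ge0 => i _; case/andP: (hu' i).
Qed.

Local Open Scope ereal_scope.

Definition bounded_chain_sum r n : \bar R :=
  \esum_(c in bounded_chains r n) (\prod_(x <- c) inv_ffact2 x)%:E.

Lemma bounded_chain_sum0 n : bounded_chain_sum 0 n = 1.
Proof. by rewrite /bounded_chain_sum bounded_chains0 esum_set1 ?big_nil. Qed.

Lemma bounded_chain_sum_1 r : bounded_chain_sum r.+1 1 = 0.
Proof. by rewrite /bounded_chain_sum bounded_chains_1 esum_set0. Qed.

Lemma bounded_chain_sumS r n : bounded_chain_sum r.+1 n.+1 <=
  bounded_chain_sum r.+1 n + (inv_ffact2 n.+1)%:E * bounded_chain_sum r n.+1.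
Proof.
have w0 c : 0 <= (\prod_(x <- c) inv_ffact2 x)%:E.
  by rewrite lee_fin prodr_ge0 // => x _; exact: inv_ffact2_ge0.
rewrite /bounded_chain_sum.
apply: le_trans (le_esum_subset _ _ _ (bounded_chainsS r n) _) _ => //.
apply: le_trans (le_esum_setU _ _ _ _) _ => //; apply: leeD2l.
rewrite esum_image; last by move=> c d _ _ [].
under eq_esum do rewrite big_cons EFinM.
by apply: esumZl_le => //; exact: inv_ffact2_ge0.
Qed.

Lemma bounded_chain_sum_le r n :
  bounded_chain_sum r n.+2 <= ((2^-1) ^+ r * prod41_partial R n.+3)%:E.
Proof.
elim: r n => [|r IHr] n.
  by rewrite bounded_chain_sum0 expr0 mul1r lee_fin; case/andP: (prod41_partial_bounds n).
elim: n => [|n IHn]; apply: le_trans (bounded_chain_sumS r _) _.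
  rewrite bounded_chain_sum_1 add0e.
  apply: le_trans (lee_wpmul2l _ (IHr 0%N)) _; first by rewrite lee_fin inv_ffact2_ge0.
  rewrite -EFinM lee_fin exprS mulrA.
  by have -> : inv_ffact2 2 = (2^-1)%R by rewrite /inv_ffact2; congr GRing.inv; ring.
apply: le_trans (leeD IHn (lee_wpmul2l _ (IHr n.+1))) _.
  by rewrite lee_fin inv_ffact2_ge0.
rewrite -EFinM -EFinD lee_fin prod41_partial_recr exprS.
by rewrite le_eqVlt; apply/orP; left; apply/eqP; field.
Qed.

Lemma esum_chains_inv_ffact2_le r :
  \esum_(c in chains r 2) (\prod_(x <- c) inv_ffact2 x)%:E <=
  ((2^-1) ^+ r * prod41 R)%:E.
Proof.
apply: ge_ereal_sup => _ [X [finX Xch] <-].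
have [n Xn] := finite_set_seq_bounded _ finX.
have Xb : X `<=` bounded_chains r n.+2.
  move=> c Xc; split; first exact: Xch.
  by apply: sub_all (Xn c Xc) => x /=; lia.
apply: le_trans (_ : _ <= bounded_chain_sum r n.+2) _.
  by apply: ereal_sup_ubound; exists X.
apply: le_trans (bounded_chain_sum_le r n) _.
rewrite lee_fin ler_wpM2l ?exprn_ge0 ?invr_ge0 //.
by case/andP: (prod41_partial_bounds n).
Qed.

Lemma zeta_star_nseq2 s :
  zeta_star R (nseq s 2%N) = \esum_(d in chains s 1) (\prod_(x <- d) x%:R ^- 2)%:E.
Proof.
rewrite /zeta_star size_nseq; apply: eq_esum => d [hs _].
rewrite (big_nth 0%N) big_mkord hs; congr EFin.
by apply: eq_bigr => i _; rewrite nth_nseq ltn_ord.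
Qed.

Lemma zeta_star_rcons s : zeta_star R (rcons (nseq s 2%N) 1%N) =
  \esum_(c in chains s.+1 1) (chain_term (fun x => x%:R ^- 2) (fun x => x%:R ^- 1) s c)%:E.
Proof.
rewrite /zeta_star size_rcons size_nseq; apply: eq_esum => c _; congr EFin.
rewrite big_ord_recr /= nth_rcons size_nseq ltnn eqxx; congr (_ * _)%R.
by apply: eq_bigr => i _; rewrite nth_rcons size_nseq ltn_ord nth_nseq ltn_ord.
Qed.

Lemma zeta_star_rcons_split s : zeta_star R (rcons (nseq s 2%N) 1%N) =
  \esum_(c in chains s.+1 2) (chain_term (fun x => x%:R ^- 2) (fun x => x%:R ^- 1) s c)%:E
  + zeta_star R (nseq s 2%N).
Proof.
rewrite zeta_star_rcons esum_chains_rcons; last first.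
  by move=> c _; rewrite lee_fin chain_term_ge0 // => x; rewrite invr_ge0 exprn_ge0.
rewrite zeta_star_nseq2; congr (_ + _); apply: eq_esum => d [hs _].
by rewrite chain_term_rcons // expr1 invr1 mulr1.
Qed.

Lemma zeta_star_nseq2_le s : zeta_star R (nseq s 2%N) <=
  (2 ^+ s)%:E * \esum_(c in chains s 2) (\prod_(x <- c) inv_ffact2 x)%:E.
Proof.
rewrite zeta_star_nseq2 (chains_succ s 1) esum_image; last first.
  by move=> c d _ _; apply: (inj_map succn_inj).
apply: le_trans (esumZl_le _ _ _ _ _); last 2 first.
- by rewrite exprn_ge0.
- by move=> d; rewrite lee_fin prodr_ge0 // => x _; exact: inv_ffact2_ge0.
apply: le_esum => d [hs [_ d_pos]]; rewrite -EFinM lee_fin big_map.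
rewrite -hs -iter_mulr_1 -(count_predT d) -big_const_seq -big_split /=.
rewrite big_seq [leRHS]big_seq; apply: ler_prod => x xd.
by rewrite invr_ge0 exprn_ge0 // inv_ffact2S_ge // (allP d_pos).
Qed.

Lemma zeta_star_nseq2_fin s : zeta_star R (nseq s 2%N) \is a fin_num.
Proof.
rewrite ge0_fin_numE; last first.
  by apply: esum_ge0 => c _; rewrite lee_fin prodr_ge0.
apply: le_lt_trans (zeta_star_nseq2_le s) _.
apply: le_lt_trans (lee_wpmul2l _ (esum_chains_inv_ffact2_le s)) _.
  by rewrite lee_fin exprn_ge0.
by rewrite -EFinM ltry.
Qed.

Lemma lhs41_le s : lhs41 R s <=
  \esum_(c in chains s.+1 2) (chain_term (fun x => x%:R ^- 2) (fun x => x%:R ^- 1) s c)%:E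
  + (2^-1)%:E * \esum_(d in chains s 2) (\prod_(x <- d) inv_ffact2 x)%:E.
Proof.
have -> : lhs41 R s =
    \esum_(c in chains s.+1 2) (chain_term inv_ffact2 (fun x => x%:R^-1) s c)%:E by [].
rewrite esum_chains_rcons; last first.
  by move=> c _; rewrite lee_fin chain_term_ge0 // => x; rewrite ?inv_ffact2_ge0 ?invr_ge0.
apply: leeD.
  rewrite chains_succ esum_image; last by move=> c d _ _; apply: (inj_map succn_inj).
  apply: le_esum => c hc; rewrite lee_fin chain_term_map_succ; last by case: hc.
  apply: ler_chain_term => [|x x0|x x0] /=; first exact: chainsS.
    by rewrite inv_ffact2_ge0 inv_ffact2S_le.
  by rewrite invr_ge0 ler0n expr1 lef_pV2 ?posrE ?ltr0n ?ler_nat /=.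
under eq_esum => d [hs _] do rewrite chain_term_rcons // mulrC EFinM.
apply: esumZl_le => [|d]; first by rewrite invr_ge0.
by rewrite lee_fin prodr_ge0 // => x _; exact: inv_ffact2_ge0.
Qed.

End chain_sums.

Theorem lemma4p1 (R : realType) (s : nat) (hs : (1 <= s)%N) :
  (lhs41 R s <=
     ((2 ^+ s.+1)^-1 * prod41 R)%:E
     + zeta_star R (rcons (nseq s 2%N) 1%N) - zeta_star R (nseq s 2%N))%E.
Proof.
rewrite zeta_star_rcons_split addeA addeK ?zeta_star_nseq2_fin // addeC.
apply: le_trans (lhs41_le R s) _; apply: leeD2l.
apply: le_trans (lee_wpmul2l _ (esum_chains_inv_ffact2_le R s)) _.
  by rewrite lee_fin invr_ge0.
by rewrite -EFinM lee_fin exprSr invfM exprVn mulrA [(2^-1 * _)%R]mulrC.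
Qed.
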